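(* Let $L\subseteq B_p$ be an integral lattice with $\mathbb{Z}\subseteq L$. Then \[\theta_L(q)=\Big(\sum_{\substack{\beta\in\tau(L)\\ N(\beta)\equiv 0\ (\mathrm{mod}\ 4)}}q^{N(\beta)/4}\Big)\theta_0(q)+\Big(\sum_{\substack{\beta\in\tau(L)\\ N(\beta)\equiv 3\ (\mathrm{mod}\ 4)}}q^{(1+N(\beta))/4}\Big)\theta_1(q).\]
   Context: $B_p$ is the quaternion algebra over $\mathbb{Q}$ ramified exactly at the prime $p$ and $\infty$, with canonical involution $\overline{x}$, reduced norm $N(x)=x\overline{x}$ and reduced trace $\mathrm{Tr}(x)=x+\overline{x}$. A lattice $L\subseteq B_p$ is integral if $N(x),\mathrm{Tr}(x)\in\mathbb{Z}$ for all $x\in L$. $\tau:B_p\to B_p$ is $\tau(x)=2x-\mathrm{Tr}(x)$ and $\tau(L)=\{\tau(x):x\in L\}$. $\theta_L(q)=\sum_{x\in L}q^{N(x)}$, $\theta_0(q)=\sum_{n\in\mathbb{Z}}q^{n^2}$, $\theta_1(q)=\sum_{n\in\mathbb{Z}}q^{n^2+n}$. *)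

From HB Require Import structures.
From mathcomp Require Import all_boot all_order all_algebra.
Set Implicit Arguments. Unset Strict Implicit. Unset Printing Implicit Defensive.
Import Order.TTheory GRing.Theory Num.Theory.
Local Open Scope ring_scope.

(* Quaternion algebra (a,b)_Q with basis 1,i,j,k, i^2=a, j^2=b, ij=-ji=k.
   An element is a 4-tuple (x0,x1,x2,x3) = x0 + x1 i + x2 j + x3 k. *)
Definition quat : Type := (rat * rat * rat * rat)%type.

Definition qmk (x0 x1 x2 x3 : rat) : quat := (x0, x1, x2, x3).
Definition q0 (x : quat) : rat := x.1.1.1.
Definition q1 (x : quat) : rat := x.1.1.2.
Definition q2 (x : quat) : rat := x.1.2.
Definition q3 (x : quat) : rat := x.2.

Definition qadd (x y : quat) : quat :=
  qmk (q0 x + q0 y) (q1 x + q1 y) (q2 x + q2 y) (q3 x + q3 y).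
Definition qscale (c : rat) (x : quat) : quat :=
  qmk (c * q0 x) (c * q1 x) (c * q2 x) (c * q3 x).
Definition qzero : quat := qmk 0 0 0 0.
Definition qscal (c : rat) : quat := qmk c 0 0 0.

Definition qmul (a b : rat) (x y : quat) : quat :=
  let: (x0, x1, x2, x3) := (q0 x, q1 x, q2 x, q3 x) in
  let: (y0, y1, y2, y3) := (q0 y, q1 y, q2 y, q3 y) in
  qmk (x0*y0 + a*x1*y1 + b*x2*y2 - a*b*x3*y3)
      (x0*y1 + x1*y0 - b*x2*y3 + b*x3*y2)
      (x0*y2 + x2*y0 + a*x1*y3 - a*x3*y1)
      (x0*y3 + x3*y0 + x1*y2 - x2*y1).

Definition qconj (x : quat) : quat := qmk (q0 x) (- q1 x) (- q2 x) (- q3 x).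

(* reduced norm N(x) = x * conj x and reduced trace Tr(x) = x + conj x;
   both are scalars (elements of Q.1); we return the rational scalar. *)
Definition qnorm (a b : rat) (x : quat) : rat := q0 (qmul a b x (qconj x)).
Definition qtrace (x : quat) : rat := q0 (qadd x (qconj x)).

Definition qtau (x : quat) : quat :=
  qadd (qscale 2 x) (qscal (- qtrace x)).

(* Standard presentation (Pizer) of the quaternion algebra B_p over Q
   ramified exactly at p and infinity, as (a,b)_Q. *)
Definition Bp_params (p : nat) (a b : rat) : Prop :=
  [\/ (p = 2%N /\ a = -1 /\ b = -1),
      (p %% 4 = 3)%N /\ a = -1 /\ b = - (p%:R),
      (p %% 8 = 5)%N /\ a = -2 /\ b = - (p%:R)
    | (p %% 8 = 1)%N /\ exists q : nat,
        [/\ prime q, (q %% 4 = 3)%N,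
            (forall x : nat, x ^ 2 %% q <> p %% q)%N,
            a = - (p%:R) & b = - (q%:R)]].

Definition is_lattice (L : quat -> Prop) : Prop :=
  exists e : 'I_4 -> quat,
    (forall c : 'I_4 -> rat,
        \big[qadd/qzero]_(i < 4) qscale (c i) (e i) = qzero ->
        forall i, c i = 0) /\
    (forall x, L x <-> exists z : 'I_4 -> int,
        x = \big[qadd/qzero]_(i < 4) qscale ((z i)%:~R) (e i)).

Definition is_int (r : rat) : Prop := exists z : int, r = z%:~R.

Definition integral_lattice (a b : rat) (L : quat -> Prop) : Prop :=
  forall x, L x -> is_int (qnorm a b x) /\ is_int (qtrace x).

Definition contains_Z (L : quat -> Prop) : Prop :=
  forall z : int, L (qscal z%:~R).

Definition tau_set (L : quat -> Prop) : quat -> Prop :=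
  fun y => exists x, L x /\ y = qtau x.

Definition ncard (T : eqType) (P : T -> Prop) (k : nat) : Prop :=
  exists s : seq T, [/\ uniq s, size s = k & forall x, x \in s <-> P x].

(* Since Tr x = 2 x_0 is an integer, every x in L is (Tr x + tau x)/2 with tau x pure, and
   N x = (Tr x)^2/4 + N(tau x)/4.  If Tr x = 2z then N(tau x) = 4(N x - z^2) = 4k; if
   Tr x = 2z + 1 then N(tau x) = 4(N x - z^2 - z) - 1 = 4k - 1.  Conversely, for
   beta = tau y in tau(L) the residue of N(beta) mod 4 forces the parity of Tr y, so
   z + beta/2 (resp. z + 1/2 + beta/2) differs from y by an integer and lies in L.  Thus
   x |-> (tau x, floor (Tr x / 2)) is a bijection from {x in L | N x = n} onto the pairs
   (beta, z) with N beta = 4k, z^2 = n - k, or N beta = 4k - 1, z^2 + z = n - k; counting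
   both sides gives the coefficient of q^n in the identity.  All the sets involved are
   finite because L has bounded denominators and N is positive definite. *)

From Stdlib Require Import ClassicalEpsilon.
From mathcomp Require Import all_boot all_order all_algebra.
From mathcomp Require Import zify ring lra.
Set Implicit Arguments.
Unset Strict Implicit.
Unset Printing Implicit Defensive.
Import Order.TTheory GRing.Theory Num.Theory.
Local Open Scope ring_scope.

Section FiniteCounting.

Variable T : eqType.
Implicit Types (P Q : T -> Prop) (s : seq T).

Lemma ncard_ext P Q k : ncard P k -> (forall x, P x <-> Q x) -> ncard Q k.
Proof. by move=> [s [us sz sP]] PQ; exists s; split=> // x; rewrite sP. Qed.

Lemma ncard_sub s P : (forall x, P x -> x \in s) -> exists k, ncard P k.
Proof.
move=> Ps; set t := [seq x <- undup s | excluded_middle_informative (P x)].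
exists (size t), t; split=> //; first by rewrite filter_uniq ?undup_uniq.
move=> x; rewrite mem_filter mem_undup.
by case: excluded_middle_informative => [Px | nPx]; split=> // /[dup] /Ps ->.
Qed.

Lemma ncardU P Q m n : ncard P m -> ncard Q n -> (forall x, P x -> ~ Q x) ->
  ncard (fun x => P x \/ Q x) (m + n).
Proof.
move=> [s [us <- sP]] [t [ut <- tQ]] PnQ; exists (s ++ t); rewrite size_cat.
split=> // [|x]; last first.
  by rewrite mem_cat; split=> [/orP[/sP|/tQ]|[/sP|/tQ] ->]; rewrite ?orbT; [left|right|..].
rewrite cat_uniq us ut andbT; apply/hasPn => x /tQ Qx; apply/negP => /sP Px.
exact: PnQ Px Qx.
Qed.

Lemma ncard0 : ncard (fun _ : T => False) 0.
Proof. by exists [::]. Qed.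

End FiniteCounting.

Lemma ncard_image2 (Y Z T : eqType) (A : Y -> Prop) (B : Z -> Prop) (f : Y -> Z -> T) m n :
  ncard A m -> ncard B n ->
  (forall y y' z z', A y -> A y' -> B z -> B z' -> f y z = f y' z' -> y = y' /\ z = z') ->
  ncard (fun x => exists y z, [/\ A y, B z & x = f y z]) (m * n).
Proof.
move=> [s [us <- sA]] [t [ut <- tB]] f_inj.
exists [seq f y z | y <- s, z <- t]; rewrite size_allpairs; split=> //.
  apply: allpairs_uniq => // -[y z] [y' z'].
  move=> /allpairsP[[? ?] /= [/sA Ay /tB Bz [-> ->]]].
  move=> /allpairsP[[? ?] /= [/sA Ay' /tB Bz' [-> ->]]].
  by case/(f_inj _ _ _ _ Ay Ay' Bz Bz') => -> ->.
move=> x; split=> [/allpairsP[[y z] [/sA Ay /tB Bz ->]] | [y [z [/sA sy /tB tz ->]]]].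
  by exists y, z.
exact: allpairs_f.
Qed.

Lemma ncard_bigU_image2 (I Y Z T : eqType) (r : seq I) (A : I -> Y -> Prop) (B : I -> Z -> Prop)
    (ca cb : I -> nat) (f : Y -> Z -> T) :
  uniq r -> (forall i, ncard (A i) (ca i)) -> (forall i, ncard (B i) (cb i)) ->
  (forall i j y, i \in r -> j \in r -> A i y -> A j y -> i = j) ->
  (forall i j y y' z z', A i y -> A j y' -> B i z -> B j z' ->
     f y z = f y' z' -> y = y' /\ z = z') ->
  ncard (fun x => exists i y z, [/\ i \in r, A i y, B i z & x = f y z])
        (\sum_(i <- r) ca i * cb i)%N.
Proof.
move=> + Aca Bcb; elim: r => [_ _ _ | i r IH /= /andP[ir ur] Adisj f_inj].
  by rewrite big_nil; apply: ncard_ext (@ncard0 _) _ => x; split=> // -[? [? [? []]]].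
have head_card := ncard_image2 (Aca i) (Bcb i) (fun y y' z z' => f_inj i i y y' z z').
have r_sub : {subset r <= i :: r} := fun j => @mem_behead _ (i :: r) j.
have tail_card := IH ur (fun j k y jr kr => Adisj j k y (r_sub j jr) (r_sub k kr)) f_inj.
rewrite big_cons; apply: ncard_ext (ncardU head_card tail_card _) _ => [x | x].
  move=> [y [z [Ay Bz ->]]] [j [y' [z' [jr Ay' Bz' /f_inj]]]].
  case/(_ _ _ Ay Ay' Bz Bz') => yy' _; move: Ay; rewrite yy' => Ay.
  have eij := Adisj _ _ _ (mem_head i r) (r_sub j jr) Ay Ay'.
  by move: ir; rewrite eij jr.
split=> [[[y [z [Ay Bz ->]]] | [j [y [z [jr Ay Bz ->]]]]] | [j [y [z]]]].
- by exists i, y, z; rewrite mem_head.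
- by exists j, y, z; rewrite r_sub.
rewrite in_cons => -[/orP[/eqP-> | jr] Ay Bz ->]; first by left; exists y, z.
by right; exists j, y, z.
Qed.

Definition int_window (K : nat) : seq int := [seq i%:Z - K%:Z | i <- iota 0 (K.*2).+1].

Lemma mem_int_window K m : `|m| <= K%:Z -> m \in int_window K.
Proof. by move=> mK; apply/mapP; exists (absz (m + K%:Z)); rewrite ?mem_iota; lia. Qed.

Lemma ncard_int_bounded (P : int -> Prop) (K : nat) :
  (forall z, P z -> `|z| <= K%:Z) -> exists k, ncard P k.
Proof. by move=> PK; apply: (ncard_sub (s := int_window K)) => z /PK /mem_int_window. Qed.

Lemma ncard_sqr_eq (m : nat) : exists k, ncard (fun z : int => z ^+ 2 = m%:Z) k.
Proof. by apply: (ncard_int_bounded (K := m)) => z <-; rewrite expr2; nia. Qed.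

Lemma ncard_sqr_add_eq (m : nat) : exists k, ncard (fun z : int => z ^+ 2 + z = m%:Z) k.
Proof. by apply: (ncard_int_bounded (K := m.+1)) => z zm; rewrite expr2 in zm; nia. Qed.

Definition rat_window (d : int) (M : nat) : seq rat :=
  [seq m%:~R / d%:~R | m <- int_window (`|d| ^ 2 * M)].

Lemma mem_rat_window d M (r : rat) : 0 < d -> d%:~R * r \is a Num.int -> r ^+ 2 <= M%:R ->
  r \in rat_window d M.
Proof.
move=> d_gt0 /intrP[m dr] rM.
have d_neq0 : d%:~R != 0 :> rat by rewrite intr_eq0 gt_eqF.
have -> : r = m%:~R / d%:~R by rewrite -dr mulrAC mulfV ?mul1r.
apply: (map_f (fun m : int => m%:~R / d%:~R : rat)); apply: mem_int_window.
have : (m ^+ 2)%:~R <= (d ^+ 2 * M%:Z)%:~R :> rat.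
  rewrite rmorphXn /= -dr exprMn mulrC rmorphM /= rmorphXn [X in _ <= X]mulrC.
  by apply: ler_wpM2r; rewrite ?sqr_ge0.
rewrite ler_int => mM; nia.
Qed.

Definition qcoords (x : quat) : seq rat := [:: q0 x; q1 x; q2 x; q3 x].

Definition quat_grid (R : seq rat) : seq quat :=
  [seq (t, w) | t <- [seq (s, v) | s <- [seq (t, u) | t <- R, u <- R], v <- R], w <- R].

Lemma mem_quat_grid R x : all (mem R) (qcoords x) -> x \in quat_grid R.
Proof.
case: x => [[[t u] v] w] /and5P[tR uR vR wR _].
by do 3!apply: allpairs_f => //.
Qed.

Lemma ncard_quat_bounded (P : quat -> Prop) (d : int) (M : nat) : 0 < d ->
  (forall x, P x -> all (fun r => (d%:~R * r \is a Num.int) && (r ^+ 2 <= M%:R)) (qcoords x)) ->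
  exists k, ncard P k.
Proof.
move=> d_gt0 Pb; apply: (ncard_sub (s := quat_grid (rat_window d M))) => x /Pb /allP xb.
by apply: mem_quat_grid; apply/allP => r /xb /andP[]; apply: mem_rat_window.
Qed.

Arguments q0 _ /.
Arguments q1 _ /.
Arguments q2 _ /.
Arguments q3 _ /.
Arguments qmk _ _ _ _ /.
Arguments qadd _ _ /.
Arguments qscale _ _ /.
Arguments qscal _ /.
Arguments qconj _ /.
Arguments qtrace _ /.
Arguments qtau _ /.

Lemma quat_ext (x y : quat) :
  q0 x = q0 y -> q1 x = q1 y -> q2 x = q2 y -> q3 x = q3 y -> x = y.
Proof. by case: x => [[[? ?] ?] ?]; case: y => [[[? ?] ?] ?] /= -> -> -> ->. Qed.

Section QuaternionArithmetic.

Variables a b : rat.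
Implicit Types (x beta : quat) (c : rat).

Lemma qnormE x : qnorm a b x = q0 x ^+ 2 - a * q1 x ^+ 2 - b * q2 x ^+ 2 + a * b * q3 x ^+ 2.
Proof. by rewrite /qnorm /qmul /=; ring. Qed.

Lemma qtauE x : qtau x = qmk 0 (2 * q1 x) (2 * q2 x) (2 * q3 x).
Proof. by apply: quat_ext; rewrite /=; ring. Qed.

Lemma q0_tau x : q0 (qtau x) = 0.
Proof. by rewrite qtauE. Qed.

Lemma qnorm_tau x : qnorm a b (qtau x) = 4 * (qnorm a b x - q0 x ^+ 2).
Proof. by rewrite !qnormE qtauE /=; ring. Qed.

(* The paper's [x = (Tr x + tau x) / 2] reads [qlift (q0 x) (qtau x) = x]. *)
Definition qlift c beta : quat := qadd (qscal c) (qscale 2^-1 beta).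
Arguments qlift _ _ /.

Lemma qlift_tau_shift x c : qlift c (qtau x) = qadd x (qscal (c - q0 x)).
Proof. by apply: quat_ext; rewrite qtauE /=; field. Qed.

Lemma qlift_tau x : qlift (q0 x) (qtau x) = x.
Proof. by rewrite qlift_tau_shift subrr; apply: quat_ext; rewrite /= addr0. Qed.

Lemma qnorm_lift c beta : q0 beta = 0 -> qnorm a b (qlift c beta) = c ^+ 2 + qnorm a b beta / 4.
Proof. by move=> beta0; rewrite !qnormE; move: beta0; rewrite /= => ->; field. Qed.

Lemma qlift_inj c c' beta beta' : q0 beta = 0 -> q0 beta' = 0 ->
  qlift c beta = qlift c' beta' -> beta = beta' /\ c = c'.
Proof.
move=> + + e => /= beta0 beta'0.
have /= := congr1 q0 e; rewrite beta0 beta'0 !mulr0 !addr0 => cc'.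
split=> //; apply: quat_ext; rewrite /= ?beta0 ?beta'0 //;
  [have /= := congr1 q1 e | have /= := congr1 q2 e | have /= := congr1 q3 e];
  by rewrite !add0r => /(mulfI (isT : (2^-1 : rat) != 0)).
Qed.

Lemma qnorm_coord_le x : a <= -1 -> b <= -1 -> all (fun r => r ^+ 2 <= qnorm a b x) (qcoords x).
Proof.
move=> a_le b_le; rewrite qnormE /=.
have := sqr_ge0 (q0 x); have := sqr_ge0 (q1 x); have := sqr_ge0 (q2 x); have := sqr_ge0 (q3 x).
have : 1 <= a * b by nra.
by rewrite !andbT => *; apply/and4P; split; nra.
Qed.

Lemma qnorm_ge0 x : a <= -1 -> b <= -1 -> 0 <= qnorm a b x.
Proof. by move=> a_le b_le; have /andP[/(le_trans (sqr_ge0 _))] := qnorm_coord_le x a_le b_le. Qed.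

End QuaternionArithmetic.

Lemma Bp_params_le p a b : prime p -> Bp_params p a b -> a <= -1 /\ b <= -1.
Proof.
move=> p_pr.
case=> [[_ [-> ->]] | [_ [-> ->]] | [_ [-> ->]] | [_ [q [q_pr _ _ -> ->]]]];
  by rewrite ?lerN2 ?ler1n ?prime_gt0.
Qed.

Lemma common_denominator (s : seq rat) :
  exists2 d : int, 0 < d & forall r, r \in s -> d%:~R * r \is a Num.int.
Proof.
exists (\prod_(r <- s) denq r); first by apply: prodr_gt0 => r _; apply: denq_gt0.
move=> r /perm_to_rem/(perm_big _)->.
by rewrite big_cons rmorphM /= mulrAC [_ * r]mulrC -numqE rpredM ?intr_int.
Qed.

Lemma half_int_cases (r : rat) : 2 * r \is a Num.int ->
  exists u : int, r = u%:~R \/ r = u%:~R + 2^-1.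
Proof.
move=> /intrP[T Tr]; have [u [Tu | Tu]] : exists u, T = 2 * u \/ T = 2 * u + 1.
- by exists (T %/ 2)%Z; lia.
- by exists u; left; apply: (mulfI (isT : 2 != 0 :> rat)); rewrite Tr Tu rmorphM.
- by exists u; right; apply: (mulfI (isT : 2 != 0 :> rat)); rewrite Tr Tu rmorphD rmorphM /=; field.
Qed.

Lemma four_mul_neq_sub1 (m n : int) : 4 * m%:~R != 4 * n%:~R - 1 :> rat.
Proof.
apply/eqP => e; have : (4 * m)%:~R = (4 * n - 1)%:~R :> rat by rewrite rmorphB !rmorphM.
by move/intr_inj; lia.
Qed.

Lemma intr_neq_half (m n : int) : m%:~R != n%:~R + 2^-1 :> rat.
Proof.
apply/eqP => e; have : (2 * m)%:~R = (2 * n + 1)%:~R :> rat.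
  by rewrite rmorphD !rmorphM /= e; field.
by move/intr_inj; lia.
Qed.

Section IntegralLattice.

Variables (a b : rat) (L : quat -> Prop).
Hypotheses (a_le : a <= -1) (b_le : b <= -1).
Hypotheses (L_lattice : is_lattice L) (L_integral : integral_lattice a b L) (L_Z : contains_Z L).

Lemma lattice_addr x y : L x -> L y -> L (qadd x y).
Proof.
case: L_lattice => e [_ Le] /Le[z ->] /Le[w ->]; apply/Le; exists (fun i => z i + w i).
apply: (big_rec3 (fun s t u => qadd s t = u)) => [|i s t u _ <-];
  by apply: quat_ext => /=; rewrite ?rmorphD /=; ring.
Qed.

Lemma qlift_tau_mem y c : L y -> c - q0 y \is a Num.int -> L (qlift c (qtau y)).
Proof. by move=> Ly /intrP[z zc]; rewrite qlift_tau_shift zc; apply: lattice_addr Ly (L_Z z). Qed.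

Lemma lattice_denominator :
  exists2 d : int, 0 < d & forall x, L x -> all (fun r => d%:~R * r \is a Num.int) (qcoords x).
Proof.
case: L_lattice => e [_ Le].
have [d d_gt0 de] := common_denominator (flatten [seq qcoords (e i) | i <- enum 'I_4]).
exists d => // _ /Le[z ->].
pose dint (x : quat) := all (fun r => d%:~R * r \is a Num.int) (qcoords x).
apply: (big_ind dint) => [| x y | i _]; first by rewrite /dint /= !mulr0 rpred0.
  by rewrite /dint /= => /and5P[? ? ? ? _] /and5P[? ? ? ? _]; rewrite !mulrDr !rpredD.
have : dint (e i).
  by apply/allP => r r_ei; apply: de; apply/flatten_mapP; exists i; rewrite ?mem_enum.
by rewrite /dint /= => /and5P[? ? ? ? _]; apply/and5P; split=> //; rewrite mulrCA rpredM ?intr_int.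
Qed.

Definition tau_fiber (M : rat) (y : quat) : Prop := tau_set L y /\ qnorm a b y = M.

Lemma ncard_tau_fiber M : exists k, ncard (tau_fiber M) k.
Proof.
have [d d_gt0 dL] := lattice_denominator.
have M_lt := archi_boundP (normr_ge0 M).
apply: (ncard_quat_bounded (d := d) (M := Num.bound `|M|)) => // _ [[x [Lx ->]] NM].
have /allP coord_le := qnorm_coord_le (qtau x) a_le b_le.
apply/allP => r r_tau; rewrite (le_trans (coord_le r r_tau)) ?andbT; last first.
  by rewrite NM (le_trans (ler_norm M)) ?ltW.
have /and5P[_ x1 x2 x3 _] := dL x Lx.
move: r_tau; rewrite qtauE !inE => /or4P[]/eqP->; rewrite ?mulr0 ?rpred0 //;
  by rewrite mulrCA rpredM ?natr_int.
Qed.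

Lemma lattice_scalar_cases y : L y -> exists u m : int,
  (q0 y = u%:~R /\ qnorm a b (qtau y) = 4 * m%:~R) \/
  (q0 y = u%:~R + 2^-1 /\ qnorm a b (qtau y) = 4 * m%:~R - 1).
Proof.
move=> /L_integral[[N Ny] [T Ty]].
have [u [yu | yu]] : exists u : int, q0 y = u%:~R \/ q0 y = u%:~R + 2^-1.
- by apply: half_int_cases; apply/intrP; exists T; rewrite -Ty /=; ring.
- exists u, (N - u ^+ 2); left; split=> //.
  by rewrite qnorm_tau Ny yu rmorphB rmorphXn.
- exists u, (N - u ^+ 2 - u); right; split=> //.
  by rewrite qnorm_tau Ny yu !rmorphB rmorphXn /=; field.
Qed.

Lemma tau_fiber_lift_even (n k : nat) y (z : int) : (k <= n)%N ->
  tau_fiber (4 * k)%N%:R y -> z ^+ 2 = (n - k)%N%:Z ->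
  L (qlift z%:~R y) /\ qnorm a b (qlift z%:~R y) = n%:R.
Proof.
move=> kn [[x [Lx ->]] Nk] zk; split.
  have [u [m [[xu _] | [_ Nm]]]] := lattice_scalar_cases Lx.
    by apply: qlift_tau_mem; rewrite // xu -rmorphB intr_int.
  by move: (four_mul_neq_sub1 k m); rewrite -pmulrn -natrM -Nk -Nm eqxx.
have zk' : (z ^+ 2)%:~R = (n - k)%N%:R :> rat by rewrite zk.
rewrite rmorphXn natrB //= in zk'.
by rewrite qnorm_lift ?q0_tau // Nk zk' natrM; field.
Qed.

Lemma tau_fiber_lift_odd (n k : nat) y (z : int) : (k <= n)%N ->
  tau_fiber ((4 * k)%N%:R - 1) y -> z ^+ 2 + z = (n - k)%N%:Z ->
  L (qlift (z%:~R + 2^-1) y) /\ qnorm a b (qlift (z%:~R + 2^-1) y) = n%:R.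
Proof.
move=> kn [[x [Lx ->]] Nk] zk; split.
  have [u [m [[_ Nm] | [xu _]]]] := lattice_scalar_cases Lx.
    by move: (four_mul_neq_sub1 m k); rewrite -pmulrn -natrM -Nk -Nm eqxx.
  by apply: qlift_tau_mem; rewrite // xu opprD addrACA subrr addr0 -rmorphB intr_int.
have zk' : (z ^+ 2 + z)%:~R = (n - k)%N%:R :> rat by rewrite zk.
rewrite rmorphD rmorphXn natrB //= in zk'.
by rewrite qnorm_lift ?q0_tau // Nk natrM; lra.
Qed.

Definition norm_split_even (n : nat) (x : quat) : Prop :=
  exists k y (z : int), [/\ k \in index_iota 0 n.+1, tau_fiber (4 * k)%N%:R y,
    z ^+ 2 = (n - k)%N%:Z & x = qlift z%:~R y].

Definition norm_split_odd (n : nat) (x : quat) : Prop :=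
  exists k y (z : int), [/\ k \in index_iota 1 n.+1, tau_fiber ((4 * k)%N%:R - 1) y,
    z ^+ 2 + z = (n - k)%N%:Z & x = qlift (z%:~R + 2^-1) y].

Lemma lattice_norm_cases (n : nat) x : L x -> qnorm a b x = n%:R ->
  norm_split_even n x \/ norm_split_odd n x.
Proof.
move=> Lx Nx; have tau_x : tau_set L (qtau x) by exists x.
have Ntau_ge0 := qnorm_ge0 (qtau x) a_le b_le.
move: Nx; rewrite -{1}(qlift_tau x) qnorm_lift ?q0_tau // => Nx.
have [u [m [[xu Nm] | [xu Nm]]]] := lattice_scalar_cases Lx.
- have m_ge0 : 0 <= m by rewrite -(ler0z rat); move: Ntau_ge0; rewrite Nm; lra.
  have nm : n%:Z = u ^+ 2 + m.
    by apply: (@intr_inj rat); rewrite -pmulrn -Nx xu Nm rmorphD rmorphXn /=; field.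
  have [k mk] : exists k : nat, m = k%:Z by exists `|m|%N; lia.
  have [kn zk] : (k <= n)%N /\ u ^+ 2 = (n - k)%N%:Z.
    by move: nm (sqr_ge0 u); set w := u ^+ 2; lia.
  left; exists k, (qtau x), u; rewrite mem_index_iota -xu qlift_tau.
  by split=> //; split=> //; rewrite Nm mk natrM.
- have m_ge1 : 1 <= m.
    have : 1 <= (4 * m)%:~R :> rat by move: Ntau_ge0; rewrite Nm rmorphM; lra.
    by rewrite ler1z; lia.
  have nm : n%:Z = u ^+ 2 + u + m.
    by apply: (@intr_inj rat); rewrite -pmulrn -Nx xu Nm !rmorphD rmorphXn /=; field.
  have [k mk] : exists k : nat, m = k%:Z by exists `|m|%N; lia.
  have [kn zk] : (1 <= k <= n)%N /\ u ^+ 2 + u = (n - k)%N%:Z.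
    have : 0 <= u ^+ 2 + u by rewrite expr2; nia.
    by move: nm; set w := u ^+ 2; lia.
  right; exists k, (qtau x), u; rewrite mem_index_iota -xu qlift_tau.
  by split=> //; split=> //; rewrite Nm mk natrM.
Qed.

Lemma lattice_norm_decomp (n : nat) x :
  L x /\ qnorm a b x = n%:R <-> norm_split_even n x \/ norm_split_odd n x.
Proof.
split=> [[Lx Nx] | [] [k [y [z [kn Ay zk ->]]]]]; first exact: lattice_norm_cases.
  by apply: (tau_fiber_lift_even _ Ay zk); move: kn; rewrite mem_index_iota.
by apply: (tau_fiber_lift_odd _ Ay zk); move: kn; rewrite mem_index_iota => /andP[].
Qed.

Lemma ncard_lattice_norm (n : nat) (ca cb t0 t1 : nat -> nat) :
  (forall k, ncard (tau_fiber (4 * k)%N%:R) (ca k)) ->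
  (forall k, ncard (tau_fiber ((4 * k)%N%:R - 1)) (cb k)) ->
  (forall m, ncard (fun z : int => z ^+ 2 = m%:Z) (t0 m)) ->
  (forall m, ncard (fun z : int => z ^+ 2 + z = m%:Z) (t1 m)) ->
  ncard (fun x => L x /\ qnorm a b x = n%:R)
    (\sum_(0 <= k < n.+1) ca k * t0 (n - k)%N + \sum_(1 <= k < n.+1) cb k * t1 (n - k)%N)%N.
Proof.
move=> ca_card cb_card t0_card t1_card.
have tau_pure M y : tau_fiber M y -> q0 y = 0 by case=> -[x [_ ->]] _; apply: q0_tau.
apply: (ncard_ext _ (fun x => iff_sym (lattice_norm_decomp n x))).
apply: ncardU; [apply: ncard_bigU_image2 | apply: ncard_bigU_image2 | ]; rewrite ?iota_uniq //.
- move=> i j y _ _ [_ Ni] [_]; rewrite Ni => /eqP; rewrite eqr_nat; lia.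
- move=> i j y y' z z' /tau_pure y0 /tau_pure y'0 _ _.
  by case/(qlift_inj y0 y'0) => -> /intr_inj ->.
- move=> i j y _ _ [_ Ni] [_]; rewrite Ni => /addIr/eqP; rewrite eqr_nat; lia.
- move=> i j y y' z z' /tau_pure y0 /tau_pure y'0 _ _.
  by case/(qlift_inj y0 y'0) => -> /addIr/intr_inj ->.
move=> x [i [y [z [_ /tau_pure y0 _ ->]]]] [j [y' [z' [_ /tau_pure y'0 _]]]].
by case/(qlift_inj y0 y'0) => _; apply/eqP; apply: intr_neq_half.
Qed.

End IntegralLattice.

Theorem lemma4p1 (p : nat) (a b : rat) (L : quat -> Prop) :
  prime p -> Bp_params p a b ->
  is_lattice L -> integral_lattice a b L -> contains_Z L ->
  forall n : nat,
  exists (r : nat) (ca cb t0 t1 : nat -> nat),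
    ncard (fun x : quat => L x /\ qnorm a b x = n%:R) r /\
        (forall k : nat, (k <= n)%N ->
           ncard (fun y : quat => tau_set L y /\ qnorm a b y = (4 * k)%N%:R) (ca k)) /\
        (forall k : nat, (1 <= k <= n)%N ->
           ncard (fun y : quat => tau_set L y /\ qnorm a b y = (4 * k)%N%:R - 1) (cb k)) /\
        (forall m : nat, (m <= n)%N ->
           ncard (fun z : int => z ^+ 2 = m%:Z) (t0 m)) /\
        (forall m : nat, (m <= n)%N ->
           ncard (fun z : int => z ^+ 2 + z = m%:Z) (t1 m)) /\
      r = (\sum_(0 <= k < n.+1) ca k * t0 (n - k)%N
             + \sum_(1 <= k < n.+1) cb k * t1 (n - k)%N)%N.
Proof.
move=> p_prime Bp L_lattice L_integral L_Z n.
have [a_le b_le] := Bp_params_le p_prime Bp.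
have [ca ca_card] := choice _ (fun k => ncard_tau_fiber a_le b_le L_lattice (4 * k)%N%:R).
have [cb cb_card] := choice _ (fun k => ncard_tau_fiber a_le b_le L_lattice ((4 * k)%N%:R - 1)).
have [t0 t0_card] := choice _ ncard_sqr_eq.
have [t1 t1_card] := choice _ ncard_sqr_add_eq.
eexists; exists ca, cb, t0, t1.
split; first exact: ncard_lattice_norm ca_card cb_card t0_card t1_card.
split=> [k _ | ]; first exact: ca_card.
split=> [k _ | ]; first exact: cb_card.
split=> [m _ | ]; first exact: t0_card.
by split=> [m _ | ]; first exact: t1_card.
Qed.
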